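(* In the setting described in the context, let $(x^k)$, $(\bar x^k)$, $(\alpha_k)$ be the sequences generated by the Conceptual Algorithm (with either Method 1 or Method 2). Then, for each $k$, $x^k\in T_k$ if and only if $x^k\in\operatorname{zer}(A+B)$.
   Context: Let $\mathcal H$ be a real Hilbert space with inner product $\langle\cdot,\cdot\rangle$ and norm $\|\cdot\|$. Let $A_1:\mathcal H\to\mathcal H$ be $\beta$-cocoercive for some $\beta>0$ (i.e. $\langle A_1x-A_1y,x-y\rangle\ge\beta\|A_1x-A_1y\|^2$ for all $x,y$), let $A_2:\mathcal H\to\mathcal H$ be maximally monotone and uniformly continuous, let $B:\mathcal H\rightrightarrows\mathcal H$ be maximally monotone, and set $A:=A_1+A_2$. Assume $\operatorname{zer}(A+B):=\{x:0\in Ax+Bx\}\neq\emptyset$. $J_{\alpha B}:=(I+\alpha B)^{-1}$ for $\alpha>0$, and $P_C$ denotes the orthogonal projection onto a nonempty closed convex set $C$. Fix $\theta,\delta\in(0,1)$, $\bar\delta>0$ with $1-\delta-\bar\delta>0$, and $\alpha_{-1}>0$ with $\alpha_{-1}\le4\beta\bar\delta$. Conceptual Algorithm: pick $x^0\in\mathcal H$. Given $x^k$ and $\alpha_{k-1}$, for $j\in\mathbb N$ let $\bar x^k_j:=J_{\alpha_{k-1}\theta^jB}(x^k-\alpha_{k-1}\theta^jAx^k)$ and let $j(k)$ be the smallest $j\in\mathbb N$ with $\alpha_{k-1}\theta^j\langle A_2x^k-A_2\bar x^k_j,x^k-\bar x^k_j\rangle\le\delta\|x^k-\bar x^k_j\|^2$.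 Set $\alpha_k:=\alpha_{k-1}\theta^{j(k)}$, $\bar x^k:=J_{\alpha_kB}(x^k-\alpha_kAx^k)$, $r_k:=\frac{\bar\delta}{\alpha_k}\|x^k-\bar x^k\|^2$, $T_k:=\{x\in\mathcal H:\langle \frac{x^k-\bar x^k}{\alpha_k}-(A_2x^k-A_2\bar x^k),x-\bar x^k\rangle\le r_k\}$ and $\Gamma_k:=\{x\in\mathcal H:\langle x^0-x^k,x-x^k\rangle\le0\}$. Method 1 sets $x^{k+1}:=P_{T_k}(x^k)$; Method 2 sets $x^{k+1}:=P_{T_k\cap\Gamma_k}(x^0)$. The algorithm stops if $x^{k+1}=x^k$. *)

From HB Require Import structures.
From mathcomp Require Import all_boot all_order all_algebra.
From mathcomp Require Import all_classical all_reals all_analysis.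
Set Implicit Arguments. Unset Strict Implicit. Unset Printing Implicit Defensive.
Import Order.TTheory GRing.Theory Num.Theory.
Import numFieldNormedType.Exports.
Local Open Scope classical_set_scope.
Local Open Scope ring_scope.

Definition is_inner_product (R : realType) (H : completeNormedModType R)
  (ip : H -> H -> R) : Prop :=
  [/\ forall x y, ip x y = ip y x,
      forall x y z, ip (x + y) z = ip x z + ip y z,
      forall (a : R) x y, ip (a *: x) y = a * ip x y
    & forall x, ip x x = `|x| ^+ 2].

Section Ops.
Context (R : realType) (H : completeNormedModType R) (ip : H -> H -> R).

Definition cocoercive (beta : R) (A : H -> H) : Prop :=
  forall x y, beta * `|A x - A y| ^+ 2 <= ip (A x - A y) (x - y).

Definition monotone_op (B : H -> set H) : Prop :=
  forall x y u v, B x u -> B y v -> 0 <= ip (u - v) (x - y).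

Definition maximal_monotone (B : H -> set H) : Prop :=
  monotone_op B /\
  forall B' : H -> set H, monotone_op B' ->
    (forall x u, B x u -> B' x u) -> (forall x u, B' x u -> B x u).

Definition sv (A : H -> H) : H -> set H := fun x => [set A x].

Definition zer_sum (A : H -> H) (B : H -> set H) : set H :=
  [set x | B x (- A x)].

(** the resolvent J_{a B} = (I + a B)^{-1}: J z is the (unique, by
    maximal monotonicity) point p with z \in p + a B p. *)
Definition resolvent (a : R) (B : H -> set H) (z : H) : H :=
  xget 0 [set p | exists2 b, B p b & z = p + a *: b].

Definition projC (C : set H) (x : H) : H :=
  xget 0 [set p | C p /\ forall c, C c -> `|x - p| <= `|x - c|].

End Ops.

(* If x^k lies in T_k, the linesearch inequality turns the defining inequality
   of T_k into (1 - delta - dbar) |x^k - xbar^k|^2 <= 0, so x^k = xbar^k, i.e.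
   x^k is a fixed point of the forward-backward map J_{alpha_k B}(I - alpha_k A);
   conversely a zero of A + B is such a fixed point, and then x^k = xbar^k lies
   in T_k trivially.  Both directions need the resolvent of the maximally
   monotone B to be everywhere defined and single-valued (Minty's theorem).
   Minty's theorem rests on the fact that a monotone graph G can be extended by
   a point (p, -p): maximise the concave functional -|Y - U|^2/4 - P over the
   convex hull of the points (y, u, <u, y>), (y, u) in G; near-maximisers have
   Cauchy differences Y - U, and half their limit is p. *)

From HB Require Import structures.
From mathcomp Require Import all_boot all_order all_algebra.
From mathcomp Require Import all_classical all_reals all_analysis.
From mathcomp Require Import ring lra.
Import Order.TTheory GRing.Theory Num.Theory.
Import numFieldNormedType.Exports.
Local Open Scope classical_set_scope.
Local Open Scope ring_scope.
Set Implicit Arguments. Unset Strict Implicit.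

Lemma cvg_of_dist_le (R : realType) (V : completeNormedModType R)
    (q : nat -> V) (e : nat -> R) :
  e @ \oo --> 0 -> (forall n m, `|q n - q m| <= e n + e m) -> cvg (q @ \oo).
Proof.
move=> e0 qe; apply: cauchy_cvg; apply: cauchy_exP => eps eps0.
have [N _ eN] := cvgr0_norm_lt _ e0 _ (divr_gt0 eps0 (ltr0n _ 2)).
exists (q N), N => // n /= Nn; rewrite -ball_normE /ball_ /=.
have := eN N (leqnn N); have := eN n Nn; rewrite /=.
have := ler_norm (e N); have := ler_norm (e n); have := qe N n; lra.
Qed.

Section InnerProduct.
Variables (R : realType) (H : completeNormedModType R) (ip : H -> H -> R).
Hypothesis ip_inner : is_inner_product ip.

Lemma ipC x y : ip x y = ip y x. Proof. by case: ip_inner. Qed.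
Lemma ipDl x y z : ip (x + y) z = ip x z + ip y z. Proof. by case: ip_inner. Qed.
Lemma ipZl a x y : ip (a *: x) y = a * ip x y. Proof. by case: ip_inner. Qed.
Lemma ipxx x : ip x x = `|x| ^+ 2. Proof. by case: ip_inner. Qed.

Lemma ipDr x y z : ip x (y + z) = ip x y + ip x z.
Proof. by rewrite ipC ipDl !(ipC x). Qed.

Lemma ipZr a x y : ip x (a *: y) = a * ip x y.
Proof. by rewrite ipC ipZl ipC. Qed.

Lemma ipNl x y : ip (- x) y = - ip x y.
Proof. by rewrite -scaleN1r ipZl mulN1r. Qed.

Lemma ipNr x y : ip x (- y) = - ip x y.
Proof. by rewrite -scaleN1r ipZr mulN1r. Qed.

Lemma ip0r x : ip x 0 = 0.
Proof. by rewrite -(scale0r 0) ipZr mul0r. Qed.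

Let ipE := (ipDl, ipDr, ipNl, ipNr, ipZl, ipZr).

Definition hull_obj (Y U : H) (P : R) : R := - (`|Y - U| ^+ 2 / 4) - P.

Lemma hull_obj_conv Y1 U1 P1 Y2 U2 P2 t :
  hull_obj ((1 - t) *: Y1 + t *: Y2) ((1 - t) *: U1 + t *: U2)
           ((1 - t) * P1 + t * P2) =
  (1 - t) * hull_obj Y1 U1 P1 + t * hull_obj Y2 U2 P2
    + t * (1 - t) / 4 * `|(Y1 - U1) - (Y2 - U2)| ^+ 2.
Proof.
rewrite /hull_obj; have -> : (1 - t) *: Y1 + t *: Y2 - ((1 - t) *: U1 + t *: U2) =
          (1 - t) *: (Y1 - U1) + t *: (Y2 - U2).
  by rewrite !scalerBr opprD addrACA.
rewrite -!ipxx; move: (Y1 - U1) (Y2 - U2) => q1 q2.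
by rewrite !ipE (ipC q2 q1); ring.
Qed.

Section GraphHull.
Variable G : H -> set H.
Hypothesis G_mono : monotone_op ip G.

Inductive graph_hull : H -> H -> R -> Prop :=
| graph_hull_point y u : G y u -> graph_hull y u (ip u y)
| graph_hull_conv Y1 U1 P1 Y2 U2 P2 t :
    graph_hull Y1 U1 P1 -> graph_hull Y2 U2 P2 -> 0 <= t <= 1 ->
    graph_hull ((1 - t) *: Y1 + t *: Y2) ((1 - t) *: U1 + t *: U2)
               ((1 - t) * P1 + t * P2).

Lemma graph_hull_pairing_point y u Y U P : G y u -> graph_hull Y U P ->
  ip u Y + ip U y <= ip u y + P.
Proof.
move=> Gyu; elim=> {Y U P} [y' u' Gyu' |
    Y1 U1 P1 Y2 U2 P2 t _ IH1 _ IH2 /andP[t0 t1]].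
  by have := G_mono Gyu Gyu'; rewrite !ipE; lra.
have t1' : 0 <= 1 - t by lra.
rewrite !ipE; have := ler_wpM2l t1' IH1; have := ler_wpM2l t0 IH2; lra.
Qed.

Lemma graph_hull_pairing Y1 U1 P1 Y2 U2 P2 :
  graph_hull Y1 U1 P1 -> graph_hull Y2 U2 P2 -> ip U1 Y2 + ip U2 Y1 <= P1 + P2.
Proof.
move=> h1 h2; elim: h1 => {Y1 U1 P1} [y u Gyu |
    Y1 U1 P1 Y3 U3 P3 t _ IH1 _ IH3 /andP[t0 t1]].
  exact: graph_hull_pairing_point.
have t1' : 0 <= 1 - t by lra.
rewrite !ipE; have := ler_wpM2l t1' IH1; have := ler_wpM2l t0 IH3; lra.
Qed.

Lemma graph_hull_obj_le0 Y U P : graph_hull Y U P -> hull_obj Y U P <= 0.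
Proof.
move=> h; have := graph_hull_pairing h h; rewrite /hull_obj -ipxx.
have := sqr_ge0 `|Y + U|; rewrite -ipxx !ipE (ipC Y U); lra.
Qed.

Section NearSupremum.
Variable s : R.
Hypothesis s_ub : forall Y U P, graph_hull Y U P -> hull_obj Y U P <= s.

Lemma near_sup_dist Y1 U1 P1 Y2 U2 P2 d1 d2 :
  graph_hull Y1 U1 P1 -> graph_hull Y2 U2 P2 ->
  s - d1 < hull_obj Y1 U1 P1 -> s - d2 < hull_obj Y2 U2 P2 ->
  `|(Y1 - U1) - (Y2 - U2)| ^+ 2 < 8 * (d1 + d2).
Proof.
move=> h1 h2 lt1 lt2; have half : 0 <= (2^-1 : R) <= 1 by apply/andP; split; lra.
have := s_ub (graph_hull_conv h1 h2 half); rewrite hull_obj_conv.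
have -> : 1 - 2^-1 = 2^-1 :> R by field.
lra.
Qed.

Hypothesis s_le0 : s <= 0.

Lemma near_sup_point Y U P t y u :
  graph_hull Y U P -> 0 < t <= 1 -> s - t ^+ 2 < hull_obj Y U P -> G y u ->
  hull_obj y u (ip u y) + (1 - t) / 4 * `|(Y - U) - (y - u)| ^+ 2 <= t.
Proof.
move=> h /andP[t0 t1] lt Gyu; have t01 : 0 <= t <= 1 by rewrite ltW.
have := s_ub (graph_hull_conv h (graph_hull_point Gyu) t01).
rewrite hull_obj_conv; set D := hull_obj y u _; set r := `|_| ^+ 2 => conv.
rewrite -(ler_pM2l t0); have t1' : 0 <= 1 - t by lra.
have := ler_wpM2l t1' (ltW lt); have := ler_wpM2l (ltW t0) s_le0.
have : 0 <= t * t * t by rewrite !mulr_ge0 // ltW.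
rewrite mulr0; lra.
Qed.
End NearSupremum.

Lemma graph_hull_maximizing_seq : (exists y u, G y u) ->
  exists s (Y U : nat -> H) (P : nat -> R),
  [/\ s <= 0, forall Y U P, graph_hull Y U P -> hull_obj Y U P <= s
     & forall n, graph_hull (Y n) (U n) (P n) /\
                 s - harmonic n ^+ 2 < hull_obj (Y n) (U n) (P n)].
Proof.
move=> [y0 [u0 G0]].
pose E := [set r | exists Y U P, graph_hull Y U P /\ r = hull_obj Y U P].
have E0 : E (hull_obj y0 u0 (ip u0 y0)).
  by exists y0, u0, (ip u0 y0); split => //; exact: graph_hull_point.
have E_ub : ubound E 0 by move=> _ [Y [U [P [h ->]]]]; exact: graph_hull_obj_le0.
have E_sup : has_sup E by split; [exists (hull_obj y0 u0 (ip u0 y0)) | exists 0].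
have /choice[f f_max] n : exists h : H * H * R,
    graph_hull h.1.1 h.1.2 h.2 /\ sup E - harmonic n ^+ 2 < hull_obj h.1.1 h.1.2 h.2.
  have [_ [Y [U [P [h ->]]]]] := sup_adherent (exprn_gt0 2 (harmonic_gt0 n)) E_sup.
  by exists (Y, U, P).
exists (sup E), (fun n => (f n).1.1), (fun n => (f n).1.2), (fun n => (f n).2).
split=> //; first by apply: ge_sup => //; exists (hull_obj y0 u0 (ip u0 y0)).
by move=> Y U P h; apply: sup_upper_bound => //; exists Y, U, P.
Qed.

Lemma graph_hull_sup_limit : (exists y u, G y u) ->
  exists q : H, forall y u, G y u ->
    hull_obj y u (ip u y) + `|q - (y - u)| ^+ 2 / 4 <= 0.
Proof.
move=> /graph_hull_maximizing_seq[s [Y [U [P [s_le0 s_ub maxi]]]]].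
pose q n := Y n - U n.
have q_cvg : q @ \oo --> lim (q @ \oo).
  (* the factor 3 because 8 (a^2 + b^2) <= (3 (a + b))^2 for a, b >= 0 *)
  apply: (@cvg_of_dist_le _ _ _ (fun n => 3 * harmonic n)).
    by rewrite -(mulr0 3); apply: cvgM; [exact: cvg_cst | exact: cvg_harmonic].
  move=> n m; have [hn ltn] := maxi n; have [hm ltm] := maxi m.
  have := near_sup_dist s_ub hn hm ltn ltm; rewrite -/(q n) -/(q m) => dist.
  have a0 := @harmonic_ge0 R n; have b0 := @harmonic_ge0 R m.
  rewrite -ler_sqr ?nnegrE ?addr_ge0 ?mulr_ge0 //.
  have := mulr_ge0 a0 b0; nra.
exists (lim (q @ \oo)) => y u Gyu.
set D := hull_obj y u _; set w := y - u.
have bound n : D + (1 - harmonic n) / 4 * `|q n - w| ^+ 2 <= harmonic n.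
  have [hn ltn] := maxi n; apply: (near_sup_point s_ub s_le0 hn _ ltn Gyu).
  by rewrite harmonic_gt0 /= invf_le1 ?ler1n ?ltr0n.
have bound_cvg : (fun n => D + (1 - harmonic n) / 4 * `|q n - w| ^+ 2) @ \oo -->
                 D + (1 - 0) / 4 * `|lim (q @ \oo) - w| ^+ 2.
  apply: cvgD; first exact: cvg_cst.
  apply: cvgM.
    by apply: cvgM; [apply: cvgB; [exact: cvg_cst | exact: cvg_harmonic] | exact: cvg_cst].
  apply: (cvg_comp _ (fun r : R => r ^+ 2) (cvg_norm (cvgB q_cvg (cvg_cst w)))).
  exact: exprn_continuous.
rewrite mulrC -[4^-1]mul1r -{1}(subr0 1).
exact: (ler_cvg_to bound_cvg cvg_harmonic (nearW _ bound)).
Qed.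

Theorem monotone_extension_opp : (exists y u, G y u) ->
  exists p, forall y u, G y u -> ip (p + u) (p - y) <= 0.
Proof.
move=> /graph_hull_sup_limit[q hq]; exists (2^-1 *: q) => y u /hq.
suff -> : ip (2^-1 *: q + u) (2^-1 *: q - y) =
          hull_obj y u (ip u y) + `|q - (y - u)| ^+ 2 / 4 by [].
rewrite /hull_obj -!ipxx !ipE (ipC y u) (ipC q u) (ipC q y).
by field.
Qed.
End GraphHull.

Lemma monotone_resolvent_unique (B : H -> set H) a z p b p' b' :
  monotone_op ip B -> 0 < a ->
  B p b -> z = p + a *: b -> B p' b' -> z = p' + a *: b' -> p = p'.
Proof.
move=> B_mono a0 Bpb -> Bpb' /eqP; rewrite -subr_eq0 opprD addrACA -scalerBr.
rewrite addr_eq0 => /eqP ab; have := B_mono _ _ _ _ Bpb Bpb'.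
rewrite -(pmulr_rge0 _ a0) -ipZl ab ipNr ipxx oppr_ge0 => ab0.
apply/eqP; rewrite -subr_eq0 ab oppr_eq0 -normr_eq0 -sqrf_eq0.
by rewrite eq_le ab0 sqr_ge0.
Qed.

Lemma maximal_monotone_neq0 (B : H -> set H) :
  maximal_monotone ip B -> exists y u, B y u.
Proof.
move=> [_ B_max]; apply: contrapT => B0.
have B_empty y u : ~ B y u by move=> Byu; apply: B0; exists y, u.
have mono0 : monotone_op ip (fun y u => y = 0 /\ u = 0).
  by move=> x y u v [-> ->] [-> ->]; rewrite subrr ip0r.
apply: (@B_empty 0 0); apply: (B_max _ mono0) => //.
by move=> y u /B_empty.
Qed.

Theorem maximal_monotone_surj (B : H -> set H) a z :
  maximal_monotone ip B -> 0 < a -> exists p, exists2 b, B p b & z = p + a *: b.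
Proof.
move=> B_maxmono a0; have [B_mono B_max] := B_maxmono.
have aV : a^-1 * a = 1 by rewrite mulVf ?lt0r_neq0.
(* Adjoining (p, -p) to G amounts to adjoining (p, (z - p) / a) to B. *)
pose G y u := B y (a^-1 *: (u + z)).
have G_mono : monotone_op ip G.
  move=> x y u v Gxu Gyv; have := B_mono _ _ _ _ Gxu Gyv.
  by rewrite -scalerBr ipZl pmulr_rge0 ?invr_gt0 // opprD addrACA subrr addr0.
have GE y w : B y w -> G y (a *: w - z) by rewrite /G subrK scalerA aV scale1r.
have [p p_ext] : exists p, forall y u, G y u -> ip (p + u) (p - y) <= 0.
  apply: monotone_extension_opp G_mono _.
  by have [y [w /GE Gyw]] := maximal_monotone_neq0 B_maxmono; exists y, (a *: w - z).
pose b := a^-1 *: (z - p).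
have b_ext y w : B y w -> 0 <= ip (w - b) (y - p).
  move=> /GE /p_ext; suff -> : ip (p + (a *: w - z)) (p - y) = - a * ip (w - b) (y - p).
    by rewrite mulNr oppr_le0 pmulr_rge0.
  rewrite /b !ipE; field; exact: lt0r_neq0.
have Bpb : B p b.
  apply: (B_max (fun y v => B y v \/ (y = p /\ v = b))); [|by left|by right].
  move=> x y u v [Bxu|[-> ->]] [Byv|[-> ->]].
  - exact: B_mono Bxu Byv.
  - exact: b_ext.
  - by rewrite -opprB -(opprB y) ipNl ipNr opprK; exact: b_ext.
  - by rewrite !subrr ip0r.
by exists p, b; rewrite // /b scalerA mulfV ?lt0r_neq0 // scale1r addrC subrK.
Qed.

Lemma resolventP (B : H -> set H) a z : maximal_monotone ip B -> 0 < a ->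
  exists2 b, B (resolvent a B z) b & z = resolvent a B z + a *: b.
Proof.
move=> B_maxmono /(maximal_monotone_surj z B_maxmono)[p pb].
exact: (@xgetI _ 0 [set p | exists2 b, B p b & z = p + a *: b] p pb).
Qed.

Lemma resolvent_eq (B : H -> set H) a z p b : maximal_monotone ip B -> 0 < a ->
  B p b -> z = p + a *: b -> resolvent a B z = p.
Proof.
move=> B_maxmono a0 Bpb zE; have [b' Bb' zE'] := resolventP z B_maxmono a0.
exact: monotone_resolvent_unique B_maxmono.1 a0 Bb' zE' Bpb zE.
Qed.

Lemma resolvent_fixP (B : H -> set H) a x v : maximal_monotone ip B -> 0 < a ->
  resolvent a B (x - a *: v) = x <-> B x (- v).
Proof.
move=> B_maxmono a0; split=> [xE | Bxv]; last first.
  by apply: (resolvent_eq B_maxmono a0 Bxv); rewrite scalerN.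
have [b] := resolventP (x - a *: v) B_maxmono a0; rewrite xE => Bxb /addrI.
by rewrite -scalerN => /(scalerI (lt0r_neq0 a0)) ->.
Qed.

Lemma linesearch_cut_eq a delta dbar (x xb d : H) :
  0 < a -> 0 < 1 - delta - dbar ->
  a * ip d (x - xb) <= delta * `|x - xb| ^+ 2 ->
  ip (a^-1 *: (x - xb) - d) (x - xb) <= dbar / a * `|x - xb| ^+ 2 -> x = xb.
Proof.
move=> a0 gap ls cut; apply/eqP; rewrite -subr_eq0 -normr_eq0 -sqrf_eq0.
move: cut ls; rewrite ipDl ipNl ipZl ipxx.
set N := `|_| ^+ 2; set I := ip d _ => cut ls.
have : N - a * I <= dbar * N.
  have := ler_wpM2l (ltW a0) cut.
  rewrite mulrBr mulrA mulfV ?lt0r_neq0 // mul1r mulrA.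
  by rewrite (mulrC dbar) (mulrA a) mulfV ?lt0r_neq0 // mul1r.
move=> ineq; have N0 : 0 <= N := sqr_ge0 _.
apply/eqP/le_anti; rewrite N0 andbT -(pmulr_rle0 _ gap); lra.
Qed.

End InnerProduct.

Lemma stepsizes_gt0 (R : realFieldType) (al : nat -> R) theta (j : nat -> nat) K :
  0 < al 0 -> 0 < theta ->
  (forall k, (k <= K)%N -> al k.+1 = al k * theta ^+ j k) ->
  forall k, (k <= K.+1)%N -> 0 < al k.
Proof.
move=> al0 theta0 al_step; elim=> [//|k IH] kK.
by rewrite al_step // mulr_gt0 ?exprn_gt0 ?IH // ltnW.
Qed.

Theorem proposition4p5 (R : realType) (H : completeNormedModType R)
  (ip : H -> H -> R) (beta theta delta dbar : R)
  (A1 A2 : H -> H) (B : H -> set H) (method1 : bool)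
  (x xb : nat -> H) (al : nat -> R) (jk : nat -> nat) (K : nat) :
  is_inner_product ip ->
  0 < beta -> cocoercive ip beta A1 ->
  maximal_monotone ip (sv A2) -> unif_continuous A2 ->
  maximal_monotone ip B ->
  (exists z, zer_sum (fun y => A1 y + A2 y) B z) ->
  0 < theta < 1 -> 0 < delta < 1 -> 0 < dbar -> 0 < 1 - delta - dbar ->
  0 < al 0 -> al 0 <= 4 * beta * dbar ->
  let A := fun y => A1 y + A2 y in
  let xbar := fun k j =>
    resolvent (al k * theta ^+ j) B (x k - (al k * theta ^+ j) *: A (x k)) in
  let cond := fun k j =>
    al k * theta ^+ j * ip (A2 (x k) - A2 (xbar k j)) (x k - xbar k j)
      <= delta * `|x k - xbar k j| ^+ 2 in
  let T := fun k => [set y : H |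
    ip ((al k.+1)^-1 *: (x k - xb k) - (A2 (x k) - A2 (xb k))) (y - xb k)
      <= dbar / al k.+1 * `|x k - xb k| ^+ 2] in
  let Gam := fun k => [set y : H | ip (x 0 - x k) (y - x k) <= 0] in
  (forall k, (k <= K)%N ->
     [/\ cond k (jk k), (forall j, (j < jk k)%N -> ~ cond k j),
         al k.+1 = al k * theta ^+ (jk k)
       & xb k = resolvent (al k.+1) B (x k - al k.+1 *: A (x k))]) ->
  (forall k, (k < K)%N ->
     x k.+1 = if method1 then projC (T k) (x k)
              else projC (T k `&` Gam k) (x 0)) ->
  T K (x K) <-> zer_sum A B (x K).
Proof.
move=> ip_inner _ _ _ _ B_maxmono _ /andP[theta0 _] _ _ gap al0 _.
move=> A xbar cond T Gam step _.
have al_gt0 : 0 < al K.+1.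
  by apply: (@stepsizes_gt0 _ al theta jk K al0 theta0) => // k /step[].
have [linesearch _ al_next xbK] := step K (leqnn K).
move: linesearch; rewrite /cond /xbar -al_next -xbK => linesearch.
rewrite /T /zer_sum /= -(resolvent_fixP ip_inner _ _ B_maxmono al_gt0) -xbK.
split=> [/(linesearch_cut_eq ip_inner al_gt0 gap linesearch) -> // | <-].
by rewrite !subrr ip0r // normr0 expr0n mulr0.
Qed.
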